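(* Let $\mathbf M$ be an $(N+1,k)$-admissible and micro-reversible matrix, with $Q$-process kernel $\mathbf K$ and stationary measure $\boldsymbol\pi$ (indices $i=0,\dots,N-k$). Let $\phi:\mathbb R^+\to\mathbb R$ be differentiable and convex, let $G_\phi(\mathbf Q|\boldsymbol\pi):=\sum_{i=0}^{N-k}\phi(Q_i)\pi_i$, and let $\mathbf Q(t)=\mathbf q(t)/\boldsymbol\pi$, with $\mathbf q(t)$ a probability vector, solve $\frac{d\mathbf Q}{dt}=(\mathbf K-\mathbf I)\mathbf Q$. Then $$\frac{d}{dt}G_\phi(\mathbf Q|\boldsymbol\pi)=-\frac12\sum_{i,j=0}^{N-k}K_{ij}\,\beta(Q_i,Q_j)\big(\phi'(Q_j)-\phi'(Q_i)\big)\big(\log Q_j-\log Q_i\big)\pi_i\le0.$$ Moreover, if $\phi$ is locally strongly convex in the sense that for every $M>0$ there is $c_M>0$ with $\phi''(x)\ge c_M$ for $x\in[0,M]$, then there exists $C>0$ depending only on $\phi$ and $\boldsymbol\pi$ such that $$\frac{d}{dt}G_\phi(\mathbf Q|\boldsymbol\pi)\le-C\Big|\frac{d\mathbf Q}{dt}\Big|_{\boldsymbol\pi}^2\le0,\qquad |\mathbf a|_{\boldsymbol\pi}^2:=\sum_ia_i^2\pi_i.$$ Furthermore, if $\phi(x)\ge x-1$ for all $x\ge0$, then $G_\phi(\mathbf Q|\boldsymbol\pi)\ge0$.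
   Context: Column-stochastic matrices; $\dagger$ transpose, $\circ$ entrywise product. For $1\le k<N-1$, an $(N+1)\times(N+1)$ column-stochastic $\mathbf M$ is $(N+1,k)$-admissible if, after a simultaneous permutation of rows and columns, $\mathbf M=\begin{pmatrix}\widetilde{\mathbf M}&\mathbf 0\\ \mathbf A&\mathbf I\end{pmatrix}$ with $\mathbf I$ the $k\times k$ identity, $\widetilde{\mathbf M}$ irreducible of size $N+1-k$ (the core) and $\mathbf A$ with no zero row. Its characteristic triple $(\mu,\widetilde{\mathbf w},\widetilde{\mathbf z})$: $\mu=\rho(\widetilde{\mathbf M})\in(0,1)$ and $\widetilde{\mathbf w},\widetilde{\mathbf z}$ the positive left/right eigenvectors for $\mu$, normalised by $\langle\widetilde{\mathbf w},\mathbf 1\rangle=\langle\widetilde{\mathbf w},\widetilde{\mathbf z}\rangle=1$. $\mathbf M$ is micro-reversible if $\widetilde w_i\widetilde M_{ij}\widetilde z_j=\widetilde w_j\widetilde M_{ji}\widetilde z_i$ for all $i,j$. The $Q$-process kernel is $\mathbf K=\frac1\mu\operatorname{diag}(\widetilde{\mathbf w})^{-1}\widetilde{\mathbf M}^\dagger\operatorname{diag}(\widetilde{\mathbf w})$, which is irreducible, row-stochastic, with stationary distribution $\boldsymbol\pi=\widetilde{\mathbf w}\circ\widetilde{\mathbf z}$ and $\pi_iK_{ij}=\pi_jK_{ji}$. $\beta$ is the logarithmic mean: $\beta(x,y)=\frac{x-y}{\log x-\log y}$ for $x\ne y$, $\beta(x,x)=x$ (so $\beta(Q_i,Q_j)(\log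 Q_j-\log Q_i)=Q_j-Q_i$). *)

From HB Require Import structures.
From mathcomp Require Import all_boot all_order all_algebra all_fingroup.
From mathcomp Require Import complex.
From mathcomp Require Import all_classical all_reals.
From mathcomp Require Import topology normedtype derive exp.
Set Implicit Arguments. Unset Strict Implicit. Unset Printing Implicit Defensive.
Import Order.TTheory GRing.Theory Num.Theory numFieldNormedType.Exports.
Local Open Scope ring_scope.

Section Defs.
Variable R : realType.

Definition col_stochastic m (M : 'M[R]_m) : Prop :=
  (forall i j, 0 <= M i j) /\ (forall j, \sum_i M i j = 1).

Definition irreducible_mx m (A : 'M[R]_m) : Prop :=
  forall i j, connect (fun a b => A a b != 0) i j.

Definition perm_sim m (s : 'S_m) (M : 'M[R]_m) : 'M[R]_m :=
  \matrix_(i, j) M (s i) (s j).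

Definition core n k (M : 'M[R]_(n + k)) (s : 'S_(n + k)) : 'M[R]_n :=
  ulsubmx (perm_sim s M).

(* M is (n+k,k)-admissible, witnessed by the permutation s:
   perm_sim s M = [[Mt, 0], [A, I_k]], Mt irreducible, A without zero row *)
Definition admissible_by n k (M : 'M[R]_(n + k)) (s : 'S_(n + k)) : Prop :=
  [/\ ursubmx (perm_sim s M) = 0,
      drsubmx (perm_sim s M) = 1%:M,
      irreducible_mx (ulsubmx (perm_sim s M)) &
      forall i : 'I_k, exists j : 'I_n, dlsubmx (perm_sim s M) i j != 0].

Definition is_spectral_radius m (A : 'M[R]_m) (r : R) : Prop :=
  let AC := map_mx (fun x : R => (x%:C)%C) A in
  (exists2 l : R[i], eigenvalue AC l & `|l| = (r%:C)%C) /\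
  (forall l : R[i], eigenvalue AC l -> `|l| <= (r%:C)%C).

Definition char_triple n (Mt : 'M[R]_n) (mu : R) (w z : 'I_n -> R) : Prop :=
  [/\ is_spectral_radius Mt mu,
      forall j, \sum_i w i * Mt i j = mu * w j,
      forall i, \sum_j Mt i j * z j = mu * z i,
      (forall i, 0 < w i) /\ (forall i, 0 < z i) &
      \sum_i w i = 1 /\ \sum_i w i * z i = 1].

Definition micro_reversible n (Mt : 'M[R]_n) (w z : 'I_n -> R) : Prop :=
  forall i j, w i * Mt i j * z j = w j * Mt j i * z i.

(* Q-process kernel K = mu^-1 diag(w)^-1 Mt^T diag(w) *)
Definition qkernel n (Mt : 'M[R]_n) (mu : R) (w : 'I_n -> R) : 'M[R]_n :=
  \matrix_(i, j) (mu^-1 * (w i)^-1 * Mt j i * w j).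

Definition stat_pi n (w z : 'I_n -> R) : 'I_n -> R := fun i => w i * z i.

Definition logmean (x y : R) : R :=
  if x == y then x else (x - y) / (ln x - ln y).

Definition Gphi n (phi : R -> R) (pi : 'I_n -> R) (Q : 'I_n -> R) : R :=
  \sum_i phi (Q i) * pi i.

Definition normpi2 n (pi : 'I_n -> R) (a : 'I_n -> R) : R :=
  \sum_i a i ^+ 2 * pi i.

Definition convex_pos (phi : R -> R) : Prop :=
  forall x y t : R, 0 < x -> 0 < y -> 0 <= t <= 1 ->
    phi (t * x + (1 - t) * y) <= t * phi x + (1 - t) * phi y.

(* Q(t) = q(t)/pi for t > 0: q(t) a probability vector, Q(t) > 0 (so that
   log Q makes sense) and dQ/dt = (K - I) Q *)
Definition is_Qsolution n (K : 'M[R]_n) (pi : 'I_n -> R)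
    (Q : R -> 'I_n -> R) : Prop :=
  [/\ forall t : R, 0 < t -> (forall i, 0 <= Q t i * pi i) /\
                          \sum_i Q t i * pi i = 1,
      forall t : R, 0 < t -> forall i, 0 < Q t i &
      forall t : R, 0 < t -> forall i,
        is_derive t (1 : R) (fun s : R => Q s i)
          (\sum_j (K i j - (i == j)%:R) * Q t j)].

Definition loc_strongly_convex (phi : R -> R) : Prop :=
  (forall x : R, 0 < x -> derivable (derive1 phi) x (1 : R)) /\
  forall Mb : R, 0 < Mb -> exists2 c : R, 0 < c &
    forall x : R, 0 < x -> x <= Mb -> c <= derive1 (derive1 phi) x.

End Defs.

From HB Require Import structures.
From mathcomp Require Import all_boot all_order all_algebra all_fingroup.
From mathcomp Require Import complex.
From mathcomp Require Import all_classical all_reals.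
From mathcomp Require Import topology normedtype derive exp realfun.
From mathcomp Require Import interval_inference ring lra zify.
Import Order.TTheory GRing.Theory Num.Theory numFieldNormedType.Exports.
Set Implicit Arguments. Unset Strict Implicit. Unset Printing Implicit Defensive.
Local Open Scope ring_scope.
Local Open Scope classical_set_scope.

(** Reversibility [pi_i K_ij = pi_j K_ji] turns the time derivative
  [sum_i phi'(Q_i) ((K - I) Q)_i pi_i] of [G_phi] into the Dirichlet form
  [-1/2 sum_ij K_ij (phi'(Q_j) - phi'(Q_i)) (Q_j - Q_i) pi_i], which is the
  stated expression because [beta(x, y) (log y - log x) = y - x].  Convexity
  makes [phi'] nondecreasing, so every term of the form is nonnegative.
  Since [sum_i Q_i pi_i = 1], each [Q_i] lies in [(0, 1/pi_i]]; on this
  bounded range local strong convexity and the mean value theorem give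
  [(phi'(Q_j) - phi'(Q_i)) (Q_j - Q_i) >= c (Q_j - Q_i)^2], and Jensen's
  inequality for the probability rows of [K] bounds [|dQ/dt|_pi^2] by
  [sum_ij K_ij (Q_j - Q_i)^2 pi_i].  Finally [phi(x) >= x - 1] gives
  [G_phi >= sum_i (Q_i - 1) pi_i = 0]. *)

Lemma cvg_dnbhs_at_right (R : realFieldType) (f : R -> R) (a l : R) :
  f @ a^' --> l -> f @ a^'+ --> l.
Proof.
move=> fl A /fl /nbhs_ballP [_ /posnumP[e] xe_A].
by exists e%:num => //= y xe_y /gt_eqF/negbT/xe_A; exact.
Qed.

Lemma cvg_dnbhs_at_left (R : realFieldType) (f : R -> R) (a l : R) :
  f @ a^' --> l -> f @ a^'- --> l.
Proof.
move=> fl A /fl /nbhs_ballP [_ /posnumP[e] xe_A].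
by exists e%:num => //= y xe_y /lt_eqF/negbT/xe_A; exact.
Qed.

Section RealDerivatives.
Variable R : realType.
Implicit Types (f phi : R -> R) (a b c m x y : R).

Lemma derive1_quotient_cvg f x : derivable f x 1 ->
  (fun h => h^-1 * (f (h + x) - f x)) @ 0^' --> derive1 f x.
Proof.
rewrite derive1E /derivable /derive.
have -> : (fun h : R => h^-1 *: ((f \o shift x) (h *: 1) - f x)) =
          (fun h => h^-1 * (f (h + x) - f x)).
  by apply: funext => h /=; rewrite [h *: 1]mulr1.
by move/cvgP.
Qed.

Lemma convex_derive1_le_slope phi x y : convex_pos phi -> 0 < x -> x < y ->
  derivable phi x 1 -> derive1 phi x <= (phi y - phi x) / (y - x).
Proof.
move=> cvx x0 xy dx; have yx0 : 0 < y - x by rewrite subr_gt0.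
apply: (cvgr_to_le (cvg_dnbhs_at_right (derive1_quotient_cvg dx))).
near=> h.
have h0 : 0 < h by near: h; exact: nbhs_right_gt.
have hyx : h < y - x by near: h; exact: nbhs_right_lt.
pose t := h / (y - x).
have t01 : 0 <= t <= 1.
  by rewrite /t divr_ge0 ?(ltW h0, ltW yx0) //= ler_pdivrMr // mul1r ltW.
have := cvx y x t (lt_trans x0 xy) x0 t01.
have -> : t * y + (1 - t) * x = h + x by rewrite /t; field; rewrite gt_eqF.
have -> : t * phi y + (1 - t) * phi x = phi x + h * ((phi y - phi x) / (y - x)).
  by rewrite /t; field; rewrite gt_eqF.
by rewrite -lerBlDl ler_pdivrMl // mulrC.
Unshelve. all: by end_near.
Qed.

Lemma convex_slope_le_derive1 phi x y : convex_pos phi -> 0 < x -> x < y ->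
  derivable phi y 1 -> (phi y - phi x) / (y - x) <= derive1 phi y.
Proof.
move=> cvx x0 xy dy; have yx0 : 0 < y - x by rewrite subr_gt0.
apply: (cvgr_to_ge (cvg_dnbhs_at_left (derive1_quotient_cvg dy))).
near=> h.
have h0 : h < 0 by near: h; exact: nbhs_left_lt.
have xyh : x - y < h by near: h; apply: nbhs_left_gt; rewrite subr_lt0.
pose t := - h / (y - x).
have t01 : 0 <= t <= 1.
  rewrite /t divr_ge0 ?oppr_ge0 ?(ltW h0, ltW yx0) //=.
  by rewrite ler_pdivrMr // mul1r; lra.
have := cvx x y t x0 (lt_trans x0 xy) t01.
have -> : t * x + (1 - t) * y = h + y by rewrite /t; field; rewrite gt_eqF.
have -> : t * phi x + (1 - t) * phi y = phi y + h * ((phi y - phi x) / (y - x)).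
  by rewrite /t; field; rewrite gt_eqF.
rewrite -lerBlDl => le_h.
rewrite -[leLHS](mulKf (ltr0_neq0 h0)) ler_wnM2l //.
by rewrite invr_le0 ltW.
Unshelve. all: by end_near.
Qed.

Section Monotone.
Variable phi : R -> R.
Hypothesis phi_convex : convex_pos phi.
Hypothesis phi_derivable : forall x, 0 < x -> derivable phi x 1.

Lemma convex_derive1_le x y :
  0 < x -> x <= y -> derive1 phi x <= derive1 phi y.
Proof.
move=> x0; rewrite le_eqVlt => /predU1P[-> // | xy].
apply: le_trans (convex_derive1_le_slope phi_convex x0 xy (phi_derivable x0)) _.
exact: convex_slope_le_derive1 phi_convex x0 xy (phi_derivable (lt_trans x0 xy)).
Qed.

Lemma convex_derive1_mulB_ge0 a b : 0 < a -> 0 < b ->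
  0 <= (derive1 phi b - derive1 phi a) * (b - a).
Proof.
move=> a0 b0; have [ab | /ltW ba] := leP a b.
  by apply: mulr_ge0; rewrite subr_ge0 // convex_derive1_le.
rewrite -mulrNN !opprB.
by apply: mulr_ge0; rewrite subr_ge0 // convex_derive1_le.
Qed.

End Monotone.

Lemma derive1_mulB_ge_sqr phi c m a b :
  (forall x, 0 < x -> derivable (derive1 phi) x 1) ->
  (forall x, 0 < x -> x <= m -> c <= derive1 (derive1 phi) x) ->
  0 < a -> 0 < b -> a <= m -> b <= m ->
  c * (b - a) ^+ 2 <= (derive1 phi b - derive1 phi a) * (b - a).
Proof.
move=> dd cm; wlog ab : a b / a < b => [wlog_ab a0 b0 am bm|a0 b0 _ bm].
  have [ab | ba | ->] := ltgtP a b; first exact: wlog_ab.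
    by rewrite -sqrrN -[leRHS]mulrNN !opprB wlog_ab.
  by rewrite !subrr expr2 !mulr0.
have ba0 : 0 < b - a by rewrite subr_gt0.
have phi'_derive x : x \in `]a, b[%R ->
    is_derive x 1 (derive1 phi) (derive1 (derive1 phi) x).
  rewrite derive1E => xab; apply/derivableP/dd.
  by apply: lt_trans a0 _; rewrite (itvP xab).
have phi'_cont : {within `[a, b], continuous (derive1 phi)}.
  apply: derivable_within_continuous => x xab; apply: dd.
  by apply: lt_le_trans a0 _; rewrite (itvP xab).
have [x xab ->] := MVT ab phi'_derive phi'_cont.
rewrite expr2 mulrA !ler_pM2r //; apply: cm.
  by apply: lt_trans a0 _; rewrite (itvP xab).
by apply: le_trans bm; rewrite ltW // (itvP xab).
Qed.

Lemma logmean_mul_lnB x y : 0 < x -> 0 < y ->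
  logmean x y * (ln y - ln x) = y - x.
Proof.
move=> x0 y0; rewrite /logmean; case: eqP => [-> | xy].
  by rewrite !subrr mulr0.
have lnxy : ln x - ln y != 0.
  by rewrite subr_eq0; apply/eqP => /(ln_inj x0 y0).
by rewrite -[ln y - _]opprB; field.
Qed.

Lemma Gphi_is_derive n phi (pi : 'I_n -> R) (Q : R -> 'I_n -> R) t
    (dQ : 'I_n -> R) :
  (forall i, derivable phi (Q t i) 1) ->
  (forall i, is_derive t 1 (fun u : R => Q u i) (dQ i)) ->
  is_derive t 1 (fun u : R => Gphi phi pi (Q u))
    (\sum_i derive1 phi (Q t i) * dQ i * pi i).
Proof.
move=> dphi dQi.
have -> : (fun u : R => Gphi phi pi (Q u)) =
          \sum_i (fun u => pi i *: (phi \o (Q ^~ i)) u).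
  by apply: funext => u; rewrite fct_sumE; apply: eq_bigr => i _; rewrite mulrC.
apply: is_derive_sum => i; rewrite mulrC.
apply: is_deriveZ; rewrite derive1E.
exact: is_derive1_comp (derivableP (dphi i)) (dQi i).
Qed.

End RealDerivatives.

Section ReversibleKernel.
Variables (R : realType) (n : nat) (K : 'M[R]_n) (pi : 'I_n -> R).
Hypothesis K_ge0 : forall i j, 0 <= K i j.
Hypothesis K_row1 : forall i, \sum_j K i j = 1.
Hypothesis K_reversible : forall i j, pi i * K i j = pi j * K j i.
Hypothesis pi_gt0 : forall i, 0 < pi i.

Definition dirichlet (p q : 'I_n -> R) : R :=
  \sum_i \sum_j K i j * pi i * ((p j - p i) * (q j - q i)).

Lemma generatorE (q : 'I_n -> R) i :
  \sum_j (K i j - (i == j)%:R) * q j = \sum_j K i j * (q j - q i).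
Proof.
under eq_bigr do rewrite mulrBl.
under [RHS]eq_bigr do rewrite mulrBr.
rewrite !sumrB -mulr_suml K_row1 mul1r; congr (_ - _).
rewrite (bigD1 i) //= eqxx mul1r big1 ?addr0 // => j /negbTE.
by rewrite eq_sym => ->; rewrite mul0r.
Qed.

Lemma dirichlet_formE (p q : 'I_n -> R) :
  \sum_i p i * (\sum_j K i j * (q j - q i)) * pi i
  = - (1 / 2) * dirichlet p q.
Proof.
pose S := \sum_i \sum_j pi i * K i j * p i * (q j - q i).
have -> : \sum_i p i * (\sum_j K i j * (q j - q i)) * pi i = S.
  apply: eq_bigr => i _; rewrite mulrC mulrA mulr_sumr.
  by apply: eq_bigr => j _; ring.
have S_swap : S = \sum_i \sum_j pi i * K i j * p j * (q i - q j).
  rewrite /S exchange_big /=; apply: eq_bigr => i _; apply: eq_bigr => j _.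
  by rewrite K_reversible.
have -> : dirichlet p q = - (S + S).
  rewrite {2}S_swap /S -big_split -sumrN; apply: eq_bigr => i _.
  rewrite -big_split -sumrN; apply: eq_bigr => j _ /=; ring.
lra.
Qed.

Lemma sqr_kernel_mean_le (a : 'I_n -> R) i :
  (\sum_j K i j * a j) ^+ 2 <= \sum_j K i j * a j ^+ 2.
Proof.
have variance_expand m : \sum_j K i j * (a j - m) ^+ 2 =
    \sum_j K i j * a j ^+ 2 - 2 * m * (\sum_j K i j * a j)
    + m ^+ 2 * \sum_j K i j.
  rewrite !mulr_sumr -sumrB -big_split /=.
  by apply: eq_bigr => j _; ring.
have := variance_expand (\sum_j K i j * a j); rewrite K_row1.
have : 0 <= \sum_j K i j * (a j - \sum_j K i j * a j) ^+ 2.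
  by apply: sumr_ge0 => j _; rewrite mulr_ge0 // sqr_ge0.
lra.
Qed.

Lemma normpi2_generator_le (q : 'I_n -> R) :
  normpi2 pi (fun i => \sum_j K i j * (q j - q i)) <= dirichlet q q.
Proof.
apply: ler_sum => i _.
under [leRHS]eq_bigr do rewrite mulrAC -expr2.
by rewrite -mulr_suml ler_pM2r // sqr_kernel_mean_le.
Qed.

Lemma dirichlet_logmeanE (phi : R -> R) (q : 'I_n -> R) :
  (forall i, 0 < q i) ->
  \sum_i \sum_j (K i j * logmean (q i) (q j)
     * (derive1 phi (q j) - derive1 phi (q i)) * (ln (q j) - ln (q i)) * pi i) =
  dirichlet (fun i => derive1 phi (q i)) q.
Proof.
move=> q_gt0; apply: eq_bigr => i _; apply: eq_bigr => j _.
by rewrite -(logmean_mul_lnB (q_gt0 i) (q_gt0 j)); ring.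
Qed.

Lemma dirichlet_convex_ge0 (phi : R -> R) (q : 'I_n -> R) :
  convex_pos phi -> (forall x, 0 < x -> derivable phi x 1) ->
  (forall i, 0 < q i) -> 0 <= dirichlet (fun i => derive1 phi (q i)) q.
Proof.
move=> cvx dphi q_gt0; apply: sumr_ge0 => i _; apply: sumr_ge0 => j _.
apply: mulr_ge0; first exact: mulr_ge0 (K_ge0 i j) (ltW (pi_gt0 i)).
exact: convex_derive1_mulB_ge0.
Qed.

Lemma dirichlet_ge_sqr (phi : R -> R) (c m : R) (q : 'I_n -> R) :
  (forall x, 0 < x -> derivable (derive1 phi) x 1) ->
  (forall x, 0 < x -> x <= m -> c <= derive1 (derive1 phi) x) ->
  (forall i, 0 < q i) -> (forall i, q i <= m) ->
  c * dirichlet q q <= dirichlet (fun i => derive1 phi (q i)) q.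
Proof.
move=> dd cm q_gt0 q_le; rewrite mulr_sumr; apply: ler_sum => i _.
rewrite mulr_sumr; apply: ler_sum => j _.
rewrite mulrCA ler_wpM2l ?mulr_ge0 ?(K_ge0 i j) ?(ltW (pi_gt0 i)) // -expr2.
exact: derive1_mulB_ge_sqr dd cm (q_gt0 i) (q_gt0 j) (q_le i) (q_le j).
Qed.

Lemma Qsolution_is_derive (Q : R -> 'I_n -> R) (t : R) (i : 'I_n) :
  is_Qsolution K pi Q -> 0 < t ->
  is_derive t 1 (fun u : R => Q u i) (\sum_j K i j * (Q t j - Q t i)).
Proof. by move=> [_ _ dQ] t0; rewrite -generatorE; exact: dQ. Qed.

Lemma Gphi_is_derive_dirichlet (phi : R -> R) (Q : R -> 'I_n -> R) (t : R) :
  (forall x, 0 < x -> derivable phi x 1) -> is_Qsolution K pi Q -> 0 < t ->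
  is_derive t 1 (fun u : R => Gphi phi pi (Q u))
    (- (1 / 2) * dirichlet (fun i => derive1 phi (Q t i)) (Q t)).
Proof.
move=> dphi HQ t0; have [_ Q_gt0 _] := HQ.
rewrite -dirichlet_formE.
exact: Gphi_is_derive (fun i => dphi _ (Q_gt0 t t0 i))
                      (fun i => Qsolution_is_derive i HQ t0).
Qed.

Lemma Gphi_derive1_le (phi : R -> R) (c m : R) (Q : R -> 'I_n -> R) (t : R) :
  (forall x, 0 < x -> derivable phi x 1) ->
  (forall x, 0 < x -> derivable (derive1 phi) x 1) ->
  (forall x, 0 < x -> x <= m -> c <= derive1 (derive1 phi) x) -> 0 <= c ->
  is_Qsolution K pi Q -> 0 < t -> (forall i, Q t i <= m) ->
  derive1 (fun u : R => Gphi phi pi (Q u)) t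
    <= - (c / 2) * normpi2 pi (fun i => derive1 (fun u : R => Q u i) t).
Proof.
move=> dphi dd cm c_ge0 HQ t0 Q_le; have [_ Q_gt0 _] := HQ.
rewrite derive1E; have [_ ->] := Gphi_is_derive_dirichlet dphi HQ t0.
have -> : normpi2 pi (fun i => derive1 (fun u : R => Q u i) t) =
          normpi2 pi (fun i => \sum_j K i j * (Q t j - Q t i)).
  apply: eq_bigr => i _; rewrite derive1E.
  by have [_ ->] := Qsolution_is_derive i HQ t0.
have := dirichlet_ge_sqr dd cm (Q_gt0 t t0) Q_le.
have := ler_wpM2l c_ge0 (normpi2_generator_le (Q t)).
lra.
Qed.

Lemma Gphi_dissipation (phi : R -> R) :
  convex_pos phi -> (forall x, 0 < x -> derivable phi x 1) ->
  forall Q : R -> 'I_n -> R, is_Qsolution K pi Q ->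
  forall t : R, 0 < t ->
  let D := - (1 / 2) * \sum_i \sum_j
      (K i j * logmean (Q t i) (Q t j)
         * (derive1 phi (Q t j) - derive1 phi (Q t i))
         * (ln (Q t j) - ln (Q t i)) * pi i) in
  is_derive t 1 (fun u : R => Gphi phi pi (Q u)) D /\ D <= 0.
Proof.
move=> cvx dphi Q HQ t t0 D; have [_ Q_gt0 _] := HQ.
rewrite /D dirichlet_logmeanE; last exact: Q_gt0.
split; first exact: Gphi_is_derive_dirichlet.
have := dirichlet_convex_ge0 cvx dphi (Q_gt0 t t0); lra.
Qed.

Lemma Qsolution_le_inv (Q : R -> 'I_n -> R) (t : R) (i : 'I_n) :
  is_Qsolution K pi Q -> 0 < t -> Q t i <= (pi i)^-1.
Proof.
move=> [Q_prob _ _] t0; have [Qpi_ge0 Qpi_sum1] := Q_prob t t0.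
rewrite -div1r ler_pdivlMr // -Qpi_sum1 (bigD1 i) //= lerDl.
exact: sumr_ge0.
Qed.

Lemma normpi2_ge0 (a : 'I_n -> R) : 0 <= normpi2 pi a.
Proof. by apply: sumr_ge0 => i _; rewrite mulr_ge0 ?sqr_ge0 ?ltW. Qed.

Lemma Gphi_strong_dissipation (phi : R -> R) :
  (forall x, 0 < x -> derivable phi x 1) -> loc_strongly_convex phi ->
  exists2 C : R, 0 < C &
    forall Q : R -> 'I_n -> R, is_Qsolution K pi Q ->
    forall t : R, 0 < t ->
      derive1 (fun u : R => Gphi phi pi (Q u)) t
        <= - C * normpi2 pi (fun i => derive1 (fun u : R => Q u i) t)
      /\ - C * normpi2 pi (fun i => derive1 (fun u : R => Q u i) t) <= 0.
Proof.
move=> dphi [dd strong]; pose m := 1 + \sum_i (pi i)^-1.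
have inv_le_m i : (pi i)^-1 <= m.
  rewrite /m (bigD1 i) //= addrCA lerDl addr_ge0 //.
  by apply: sumr_ge0 => j _; rewrite invr_ge0 ltW.
have m_gt0 : 0 < m.
  by apply: ltr_pwDl => //; apply: sumr_ge0 => j _; rewrite invr_ge0 ltW.
have [c c_gt0 cm] := strong m m_gt0.
exists (c / 2); first by rewrite divr_gt0.
move=> Q HQ t t0; split.
  apply: (Gphi_derive1_le dphi dd cm (ltW c_gt0) HQ t0) => i.
  exact: le_trans (Qsolution_le_inv i HQ t0) (inv_le_m i).
by rewrite mulNr oppr_le0 mulr_ge0 ?normpi2_ge0 ?divr_ge0 ?ltW.
Qed.

Lemma Gphi_Qsolution_ge0 (phi : R -> R) : \sum_i pi i = 1 ->
  (forall x, 0 <= x -> x - 1 <= phi x) ->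
  forall Q : R -> 'I_n -> R, is_Qsolution K pi Q ->
  forall t : R, 0 < t -> 0 <= Gphi phi pi (Q t).
Proof.
move=> pi_sum1 phi_ge Q [Q_prob Q_gt0 _] t t0.
have [_ Qpi_sum1] := Q_prob t t0.
have sum_Qpi_sub : \sum_i (Q t i - 1) * pi i = 0.
  under eq_bigr do rewrite mulrBl mul1r.
  by rewrite sumrB Qpi_sum1 pi_sum1 subrr.
rewrite /Gphi -[leLHS]sum_Qpi_sub.
by apply: ler_sum => i _; rewrite ler_pM2r //; exact/phi_ge/ltW/Q_gt0.
Qed.

End ReversibleKernel.

Section QProcessKernel.
Variables (R : realType) (n : nat) (Mt : 'M[R]_n) (mu : R) (w z : 'I_n -> R).
Hypothesis Mt_ge0 : forall i j, 0 <= Mt i j.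
Hypothesis w_gt0 : forall i, 0 < w i.
Hypothesis w_left_eigen : forall j, \sum_i w i * Mt i j = mu * w j.

Lemma irreducible_eigenvalue_gt0 : (1 < n)%N -> irreducible_mx Mt -> 0 < mu.
Proof.
move=> n_gt1 irr.
pose i0 : 'I_n := Ordinal (ltnW n_gt1); pose i1 : 'I_n := Ordinal n_gt1.
have [j Mt_i0j] : exists j, Mt i0 j != 0.
  have /connectP [[|j p] /= path_p last_p] := irr i0 i1.
    by move/(congr1 val): last_p.
  by exists j; case/andP: path_p.
rewrite -(pmulr_lgt0 _ (w_gt0 j)) -w_left_eigen (bigD1 i0) //=.
apply: ltr_pwDl; first by rewrite mulr_gt0 // lt0r Mt_i0j Mt_ge0.
by apply: sumr_ge0 => i _; rewrite mulr_ge0 // ltW.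
Qed.

Lemma qkernel_ge0 : 0 < mu -> forall i j, 0 <= qkernel Mt mu w i j.
Proof.
move=> mu_gt0 i j; rewrite mxE.
by rewrite !mulr_ge0 ?invr_ge0 ?Mt_ge0 ?(ltW mu_gt0) ?(ltW (w_gt0 _)).
Qed.

Lemma qkernel_row_sum1 : mu != 0 -> forall i, \sum_j qkernel Mt mu w i j = 1.
Proof.
move=> mu_neq0 i; under eq_bigr do rewrite mxE -mulrA.
rewrite -mulr_sumr.
under eq_bigr do rewrite mulrC.
by rewrite w_left_eigen; field; rewrite mu_neq0 gt_eqF.
Qed.

Lemma qkernel_reversible : micro_reversible Mt w z -> forall i j,
  stat_pi w z i * qkernel Mt mu w i j = stat_pi w z j * qkernel Mt mu w j i.
Proof.
move=> mrev i j; rewrite /stat_pi !mxE.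
have cancel_w k l : w k * z k * (mu^-1 * (w k)^-1 * Mt l k * w l) =
                    mu^-1 * (w l * Mt l k * z k).
  (* generalising [mu^-1] spares [field] the side condition [mu != 0] *)
  by move: mu^-1 => a; field; rewrite gt_eqF.
by rewrite !cancel_w mrev.
Qed.

Lemma core_ge0 (k : nat) (M : 'M[R]_(n + k)) (s : 'S_(n + k)) :
  col_stochastic M -> forall i j, 0 <= core M s i j.
Proof. by move=> [M_ge0 _] i j; rewrite !mxE. Qed.

End QProcessKernel.

Theorem lemma5 (R : realType) (n k : nat) (M : 'M[R]_(n + k))
    (s : 'S_(n + k)) (mu : R) (w z : 'I_n -> R) (phi : R -> R) :
  (0 < k)%N -> (k < (n + k).-1 - 1)%N ->
  col_stochastic M ->
  admissible_by M s ->
  char_triple (core M s) mu w z ->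
  micro_reversible (core M s) w z ->
  (forall x : R, 0 < x -> derivable phi x (1 : R)) ->
  convex_pos phi ->
  let K := qkernel (core M s) mu w in
  let pi := stat_pi w z in
  (* dissipation identity and sign *)
  (forall Q : R -> 'I_n -> R, is_Qsolution K pi Q ->
     forall t : R, 0 < t ->
     let D := - (1 / 2) * \sum_i \sum_j
          (K i j * logmean (Q t i) (Q t j)
             * (derive1 phi (Q t j) - derive1 phi (Q t i))
             * (ln (Q t j) - ln (Q t i)) * pi i) in
     is_derive t (1 : R) (fun u : R => Gphi phi pi (Q u)) D /\ D <= 0) /\
  (* local strong convexity gives a quantitative bound, C independent of Q, t *)
  (loc_strongly_convex phi ->
     exists2 C : R, 0 < C &
       forall Q : R -> 'I_n -> R, is_Qsolution K pi Q ->
       forall t : R, 0 < t ->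
         derive1 (fun u : R => Gphi phi pi (Q u)) t
           <= - C * normpi2 pi (fun i => derive1 (fun u : R => Q u i) t)
         /\ - C * normpi2 pi (fun i => derive1 (fun u : R => Q u i) t) <= 0) /\
  (* nonnegativity of G_phi *)
  ((forall x : R, 0 <= x -> x - 1 <= phi x) ->
     forall Q : R -> 'I_n -> R, is_Qsolution K pi Q ->
     forall t : R, 0 < t -> 0 <= Gphi phi pi (Q t)).
Proof.
move=> _ k_lt col [_ _ irr _] [_ w_left _ [w_gt0 z_gt0] [_ pi_sum1]].
move=> mrev dphi cvx K pi.
have n_gt1 : (1 < n)%N by lia.
have Mt_ge0 := core_ge0 s col.
have mu_gt0 := irreducible_eigenvalue_gt0 Mt_ge0 w_gt0 w_left n_gt1 irr.
have K_ge0 : forall i j, 0 <= K i j := qkernel_ge0 Mt_ge0 w_gt0 mu_gt0.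
have K_row1 : forall i, \sum_j K i j = 1 :=
  qkernel_row_sum1 w_gt0 w_left (lt0r_neq0 mu_gt0).
have K_rev : forall i j, pi i * K i j = pi j * K j i :=
  qkernel_reversible mu w_gt0 mrev.
have pi_gt0 : forall i, 0 < pi i := fun i => mulr_gt0 (w_gt0 i) (z_gt0 i).
split; first exact (Gphi_dissipation K_ge0 K_row1 K_rev pi_gt0 cvx dphi).
split; first exact (Gphi_strong_dissipation K_ge0 K_row1 K_rev pi_gt0 dphi).
exact (Gphi_Qsolution_ge0 pi_gt0 pi_sum1).
Qed.
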